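(* The joint policy $\boldsymbol{\pi}^{\text{API}}_{\text{push}}(\beta\mid\boldsymbol{\pi}_{\text{e}}^0)$ returned by the Alternating Policy Iteration (API) scheme started from initial encoder policy $\boldsymbol{\pi}_{\text{e}}^0$ does not always outperform the optimal periodic policy: there exist an instance $\langle\mathcal{S},\mathcal{A},\mathbf{P},r,\gamma,\beta\rangle$ and an initial encoder policy $\boldsymbol{\pi}_{\text{e}}^0$ such that $R_\beta^{\boldsymbol{\pi}^{\text{API}}_{\text{push}}(\beta\mid\boldsymbol{\pi}_{\text{e}}^0)}<R_\beta^{\boldsymbol{\pi}^*_{\text{per}}(\beta)}$.
   Context: Setting: finite state set $\mathcal{S}$, finite control action set $\mathcal{A}$, stochastic matrices $\mathbf{P}^a$ ($a\in\mathcal{A}$), reward $r_{s,s'}(a)$, discount $\gamma\in[0,1)$, communication cost $\beta>0$, initial state distribution. A Markov process evolves as $s_{t+1}\sim P^{a_t}_{s_t,\cdot}$; at each time $t$ either $s_t$ is transmitted to the decoder ($c_t=1$) or not ($c_t=0$); the decoder chooses $a_t=\pi_{\text{d}}(\Delta_t,s_{t-\Delta_t})\in\mathcal{A}$, where $\Delta_t\le T_{\max}$ is the time since the last transmission and $s_{t-\Delta_t}$ the last transmitted state; reward $r_t=r_{s_t,s_{t+1}}(a_t)$. For a joint policy $\boldsymbol{\pi}$, $R_\beta^{\boldsymbol{\pi}}=\mathbb{E}\big[\sum_t\gamma^t(r_t-\beta c_t)\big]$. Periodic policies transmit every $\tau$ steps for a fixed $\tau\in\{0,\dots,T_{\max}\}$;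 $\boldsymbol{\pi}^*_{\text{per}}(\beta)$ maximizes $R_\beta$ over $\tau$ and $\boldsymbol{\pi}_{\text{d}}$. Push-based policies: an encoder observing $s_t$ decides $c_t=\pi_{\text{e}}(s_t,\Delta_t,s_{t-\Delta_t})$. API scheme: from an initial encoder policy $\boldsymbol{\pi}_{\text{e}}^0$, alternately compute the decoder's best response to the current encoder policy (policy iteration over $\langle\Delta,s\rangle$, with the decoder's belief computed by Bayesian updating that conditions on the encoder not having transmitted) and the encoder's best response to the current decoder policy (policy iteration on the MDP with state $\langle s_t,\Delta_t,s_{t-\Delta_t}\rangle$), until neither policy changes; the output is $\boldsymbol{\pi}^{\text{API}}_{\text{push}}(\beta\mid\boldsymbol{\pi}_{\text{e}}^0)$. *)

From HB Require Import structures.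
From mathcomp Require Import all_boot all_order all_algebra.
From mathcomp Require Import all_classical all_reals all_analysis.
Set Implicit Arguments. Unset Strict Implicit. Unset Printing Implicit Defensive.
Import Order.TTheory GRing.Theory Num.Theory numFieldNormedType.Exports.
Local Open Scope ring_scope.

Section Model.
Variables (R : realType) (S A : finType) (Tmax : nat).
Variables (P : A -> S -> S -> R) (r : S -> S -> A -> R) (gamma beta : R).

(* Pre-decision state at time t: (s_t, d, shat) where shat is the last
   transmitted state and d = Delta_{t-1} + 1 is the age the decoder
   information would have if s_t is NOT transmitted at time t.
   d = Tmax+1 (= ord_max) forces a transmission (so that Delta_t <= Tmax);
   the initial state is (s_0, Tmax+1, s_0), i.e. s_0 is transmitted at t=0. *)
Definition pstate := (S * 'I_Tmax.+2 * S)%type.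

Definition enc_policy := {ffun pstate -> bool}.
Definition dec_policy := {ffun 'I_Tmax.+1 * S -> A}.

Definition transmit (pe : enc_policy) (z : pstate) : bool :=
  (z.1.2 == ord_max) || pe z.
Definition post_age (pe : enc_policy) (z : pstate) : 'I_Tmax.+1 :=
  if transmit pe z then ord0 else inord z.1.2.
Definition post_last (pe : enc_policy) (z : pstate) : S :=
  if transmit pe z then z.1.1 else z.2.
Definition act (pe : enc_policy) (pd : dec_policy) (z : pstate) : A :=
  pd (post_age pe z, post_last pe z).
Definition stage_reward (pe : enc_policy) (pd : dec_policy) (z : pstate) : R :=
  \sum_(s' : S) P (act pe pd z) z.1.1 s' * r z.1.1 s' (act pe pd z)
  - beta * (transmit pe z)%:R.
Definition next_state (pe : enc_policy) (z : pstate) (s' : S) : pstate :=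
  (s', inord (post_age pe z).+1, post_last pe z).
Definition step (pe : enc_policy) (pd : dec_policy) (p : pstate -> R) : pstate -> R :=
  fun z' => \sum_(z : pstate) p z *
     \sum_(s' : S | next_state pe z s' == z') P (act pe pd z) z.1.1 s'.
Definition dist_at pe pd (p0 : pstate -> R) (t : nat) : pstate -> R :=
  iter t (step pe pd) p0.
Definition disc_term pe pd (p0 : pstate -> R) (t : nat) : R :=
  gamma ^+ t * \sum_(z : pstate) dist_at pe pd p0 t z * stage_reward pe pd z.
Definition value pe pd (p0 : pstate -> R) : R := limn (series (disc_term pe pd p0)).

Definition point (z : pstate) : pstate -> R := fun z' => (z' == z)%:R.
Definition start_state (s : S) : pstate := (s, ord_max, s).
Definition init_dist (mu0 : S -> R) : pstate -> R :=
  fun z => mu0 z.1.1 * (z == start_state z.1.1)%:R.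

Definition Rbeta (mu0 : S -> R) pe pd : R := value pe pd (init_dist mu0).

Definition per_enc (tau : 'I_Tmax.+1) : enc_policy := [ffun z : pstate => (tau < z.1.2)%N].
Definition per_optimal (mu0 : S -> R) (tau : 'I_Tmax.+1) (pd : dec_policy) : Prop :=
  forall tau' pd', Rbeta mu0 (per_enc tau') pd' <= Rbeta mu0 (per_enc tau) pd.

Definition dec_BR (pe : enc_policy) (pd : dec_policy) : Prop :=
  forall (s : S) (pd' : dec_policy),
    value pe pd' (point (start_state s)) <= value pe pd (point (start_state s)).
Definition enc_BR (pd : dec_policy) (pe : enc_policy) : Prop :=
  forall (z : pstate) (pe' : enc_policy), (0 < z.1.2)%N ->
    value pe' pd (point z) <= value pe pd (point z).

(* (pe, pd) is an output of API started from pe0: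
   pd_k = BR_d(pe_k), pe_{k+1} = BR_e(pd_k), stopping at the first N >= 1
   at which neither policy changes; output (pe_N, pd_N). *)
Definition API_output (pe0 : enc_policy) (pe : enc_policy) (pd : dec_policy) : Prop :=
  exists (N : nat) (pes : nat -> enc_policy) (pds : nat -> dec_policy),
    [/\ pes 0%N = pe0,
        ((forall k, (k <= N)%N -> dec_BR (pes k) (pds k)) /\
        (forall k, (k < N)%N -> enc_BR (pds k) (pes k.+1))),
        [/\ (0 < N)%N, pes N = pes N.-1 & pds N = pds N.-1],
        (forall k, (0 < k < N)%N -> ~ (pes k = pes k.-1 /\ pds k = pds k.-1))
      & (pe = pes N /\ pd = pds N)].

End Model.

Definition stochastic (R : realType) (S A : finType) (P : A -> S -> S -> R) : Prop :=
  (forall a s s', 0 <= P a s s') /\ (forall a s, \sum_(s' : S) P a s s' = 1).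
Definition prob_dist (R : realType) (S : finType) (mu : S -> R) : Prop :=
  (forall s, 0 <= mu s) /\ \sum_(s : S) mu s = 1.

From Pilot Require Import Defs.
From HB Require Import structures.
From mathcomp Require Import all_boot all_order all_algebra.
From mathcomp Require Import all_classical all_reals all_analysis.
From mathcomp Require Import lra.
Import Order.TTheory GRing.Theory Num.Theory numFieldNormedType.Exports.
Local Open Scope ring_scope.

(* The state is an i.i.d. coin, true with probability 3/4; the reward is 1 when the decoder's
   action equals the current state, a transmission costs 1/2 and the discount factor is 1/2.
   Started from the encoder that transmits exactly the true states, API stops at once: in
   silence the decoder knows that the state is false, and against the decoder that guesses
   false in silence the encoder's best response is again to transmit exactly the true states.
   Both best responses are unique, so every run of API outputs this pair, of value 10/9,
   whereas transmitting every other step and guessing true in between earns 7/6.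
   Values are certified by a verification argument: against any V the discounted return
   telescopes into E[V(z_0)] minus the discounted Bellman gaps of V along the trajectory, so a
   fixed point of the Bellman operator is the value, a supersolution bounds it from above, and
   a deviation creating a positive gap at a reachable state is strictly suboptimal. *)

Lemma ler_sum_term {R : numDomainType} {I : finType} (Q : pred I) (F : I -> R) i :
  (forall j, Q j -> 0 <= F j) -> Q i -> F i <= \sum_(j | Q j) F j.
Proof. by move=> F_ge0 Qi; rewrite (bigD1 i) //= lerDl sumr_ge0 // => j /andP[/F_ge0]. Qed.

Section PolicyEvaluation.
Context {R : realType} {S A : finType} {Tmax : nat}.
Variables (P : A -> S -> S -> R) (r : S -> S -> A -> R) (gamma beta : R).
Variables (pe : enc_policy S Tmax) (pd : dec_policy S A Tmax).
Hypothesis P_ge0 : forall a s s', 0 <= P a s s'.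
Hypothesis P_sum1 : forall a s, \sum_s' P a s s' = 1.

Local Notation state := (pstate S Tmax).
Local Notation age z := (nat_of_ord z.1.2).

Definition expect (p f : state -> R) : R := \sum_z p z * f z.

Definition bellman (V : state -> R) (z : state) : R :=
  stage_reward P r beta pe pd z +
  gamma * \sum_s' P (act pe pd z) z.1.1 s' * V (next_state pe z s').

Definition bellman_gap (V : state -> R) (z : state) : R := V z - bellman V z.

Lemma expectB (p f g : state -> R) :
  expect p (fun z => f z - g z) = expect p f - expect p g.
Proof. by rewrite /expect -sumrB; apply: eq_bigr => z _; rewrite mulrBr. Qed.

Lemma expect_step (p V : state -> R) :
  expect (step P pe pd p) V =
  expect p (fun z => \sum_s' P (act pe pd z) z.1.1 s' * V (next_state pe z s')).
Proof.
rewrite /expect /step.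
under eq_bigr do rewrite mulr_suml.
rewrite exchange_big /=; apply: eq_bigr => z _.
under eq_bigr do rewrite -mulrA.
rewrite -mulr_sumr; congr (_ * _).
transitivity (\sum_i \sum_(s' | next_state pe z s' == i) P (act pe pd z) z.1.1 s' * V i).
  by apply: eq_bigr => i _; rewrite mulr_suml.
rewrite (exchange_big_dep xpredT) //=; apply: eq_bigr => s' _.
by rewrite (big_pred1 (next_state pe z s')).
Qed.

Lemma step_next_ge (p : state -> R) z s' :
  (forall z, 0 <= p z) ->
  p z * P (act pe pd z) z.1.1 s' <= step P pe pd p (next_state pe z s').
Proof.
move=> p_ge0; rewrite /step (le_trans _ (ler_sum_term xpredT _ z _ _)) //=.
- by rewrite ler_wpM2l // (ler_sum_term (fun s'' => next_state pe z s'' == _) _ s').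
- by move=> z' _; rewrite mulr_ge0 ?sumr_ge0.
Qed.

Lemma norm_expect_le (p f : state -> R) :
  (forall z, 0 <= p z) -> \sum_z p z = 1 -> `|expect p f| <= \sum_z `|f z|.
Proof.
move=> p_ge0 p_sum1; rewrite (le_trans (ler_norm_sum _ _ _)) //.
apply: (@le_trans _ _ (\sum_z p z * \sum_z' `|f z'|)); last by rewrite -mulr_suml p_sum1 mul1r.
apply: ler_sum => z _; rewrite normrM ger0_norm // ler_wpM2l //.
exact: (ler_sum_term xpredT (fun z' => `|f z'|)).
Qed.

Variable p0 : state -> R.
Hypothesis p0_ge0 : forall z, 0 <= p0 z.
Hypothesis p0_sum1 : \sum_z p0 z = 1.
Hypothesis p0_age0 : forall z, age z = 0%N -> p0 z = 0.

Lemma dist_at_ge0 t z : 0 <= dist_at P pe pd p0 t z.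
Proof.
elim: t z => [|t IH] z //=.
by rewrite /step sumr_ge0 // => z' _; rewrite mulr_ge0 ?sumr_ge0.
Qed.

Lemma dist_at_sum1 t : \sum_z dist_at P pe pd p0 t z = 1.
Proof.
elim: t => [|t IH] //=.
have := expect_step (dist_at P pe pd p0 t) (fun _ => 1); rewrite /expect => stepE.
under eq_bigr do rewrite -[step _ _ _ _ _]mulr1.
rewrite stepE -[RHS]IH; apply: eq_bigr => z _.
by under eq_bigr do rewrite mulr1; rewrite P_sum1 mulr1.
Qed.

(* Pre-decision states of age 0 are never reached (the age is incremented before each
   decision), so the Bellman equations below are only required at positive ages. *)
Lemma dist_at_age0 t z : age z = 0%N -> dist_at P pe pd p0 t z = 0.
Proof.
elim: t z => [|t IH] z z_age0 /=; first exact: p0_age0.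
rewrite /step big1 // => z' _; rewrite big_pred0 ?mulr0 // => s'.
apply/negP => /eqP zE; move: z_age0; rewrite -zE /= inordK //.
by rewrite ltnS (leq_trans (ltn_ord _)).
Qed.

Local Notation partial_value := (series (disc_term P r gamma beta pe pd p0)).

Definition gap_term (V : state -> R) (t : nat) : R :=
  gamma ^+ t * expect (dist_at P pe pd p0 t) (bellman_gap V).

Lemma partial_valueE (V : state -> R) n :
  partial_value n = expect p0 V - gamma ^+ n * expect (dist_at P pe pd p0 n) V
                    - series (gap_term V) n.
Proof.
elim: n => [|n IH]; first by rewrite /series /= !big_geq // expr0 mul1r !subrr.
rewrite !seriesSr IH /gap_term /bellman_gap expectB.
have -> : expect (dist_at P pe pd p0 n) (bellman V) =
  expect (dist_at P pe pd p0 n) (stage_reward P r beta pe pd) +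
  gamma * expect (dist_at P pe pd p0 n.+1) V.
  rewrite [dist_at _ _ _ _ n.+1]/= expect_step /expect mulr_sumr -big_split /=.
  by apply: eq_bigr => z _; rewrite /bellman mulrDr mulrCA.
rewrite /disc_term exprS -/(expect (dist_at P pe pd p0 n) _); lra.
Qed.

Hypothesis gamma_ge0 : 0 <= gamma.
Hypothesis gamma_lt1 : gamma < 1.

Let norm_gamma_lt1 : `|gamma| < 1. Proof. by rewrite ger0_norm. Qed.

Lemma is_cvg_partial_value : cvgn partial_value.
Proof.
set M := \sum_z `|stage_reward P r beta pe pd z|.
apply: normed_cvg.
apply: (@series_le_cvg _ (fun n => `|disc_term P r gamma beta pe pd p0 n|) (geometric M gamma)).
- by [].
- by move=> n; rewrite /geometric /= mulr_ge0 ?exprn_ge0 ?sumr_ge0.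
- move=> n; rewrite /disc_term /geometric /= normrM ger0_norm ?exprn_ge0 // mulrC.
  by rewrite ler_wpM2r ?exprn_ge0 // norm_expect_le ?dist_at_sum1 //; exact: dist_at_ge0.
- exact: is_cvg_geometric_series.
Qed.

Lemma value_le_eventually c K :
  (\forall n \near \oo%classic, partial_value n <= c + K * gamma ^+ n) ->
  value P r gamma beta pe pd p0 <= c.
Proof.
move=> le_c; rewrite -[c]addr0.
exact: ler_cvg_to is_cvg_partial_value (cvgD (cvg_cst c) (cvg_geometric K norm_gamma_lt1)) le_c.
Qed.

Lemma value_ge_eventually c K :
  (\forall n \near \oo%classic, c - K * gamma ^+ n <= partial_value n) ->
  c <= value P r gamma beta pe pd p0.
Proof.
move=> ge_c; rewrite -[c]subr0.
exact: ler_cvg_to (cvgB (cvg_cst c) (cvg_geometric K norm_gamma_lt1)) is_cvg_partial_value ge_c.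
Qed.

Variable V : state -> R.

Let discounted_expect_bound n :
  `|gamma ^+ n * expect (dist_at P pe pd p0 n) V| <= (\sum_z `|V z|) * gamma ^+ n.
Proof.
rewrite normrM ger0_norm ?exprn_ge0 // mulrC ler_wpM2r ?exprn_ge0 //.
by rewrite norm_expect_le ?dist_at_sum1 //; exact: dist_at_ge0.
Qed.

Section Supersolution.
Hypothesis V_super : forall z, (0 < age z)%N -> 0 <= bellman_gap V z.

Lemma dist_at_gap_ge0 t z : 0 <= dist_at P pe pd p0 t z * bellman_gap V z.
Proof.
have [z_age0|z_pos] := posnP (age z); first by rewrite dist_at_age0 // mul0r.
by rewrite mulr_ge0 ?V_super ?dist_at_ge0.
Qed.

Lemma gap_term_ge0 t : 0 <= gap_term V t.
Proof. by rewrite mulr_ge0 ?exprn_ge0 // sumr_ge0 // => z _; exact: dist_at_gap_ge0. Qed.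

Lemma value_le_gap m : value P r gamma beta pe pd p0 <= expect p0 V - series (gap_term V) m.
Proof.
apply: (value_le_eventually _ (\sum_z `|V z|)); near=> n.
have mn : (m <= n)%N by near: n; exists m.
have : series (gap_term V) m <= series (gap_term V) n.
  exact: nondecreasing_series (fun k _ _ => gap_term_ge0 k) _ _ mn.
move: (discounted_expect_bound n); rewrite (partial_valueE V) ler_norml => /andP[lo _]; lra.
Unshelve. all: by end_near.
Qed.

Lemma value_le_supersolution : value P r gamma beta pe pd p0 <= expect p0 V.
Proof. by have := value_le_gap 0; rewrite /series /= big_geq // subr0. Qed.

Lemma value_lt_supersolution t z : 0 < gamma ->
  0 < dist_at P pe pd p0 t z -> 0 < bellman_gap V z ->
  value P r gamma beta pe pd p0 < expect p0 V.
Proof.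
move=> gamma_gt0 dist_gt0 gap_gt0; apply: (le_lt_trans (value_le_gap t.+1)).
rewrite seriesSr ltrBlDr ltrDl ltr_wpDl //.
  by rewrite /series /= sumr_ge0 // => k _; exact: gap_term_ge0.
rewrite /gap_term mulr_gt0 ?exprn_gt0 //.
apply: (lt_le_trans _ (ler_sum_term xpredT _ z _ _)) => //=; first exact: mulr_gt0.
by move=> z' _; exact: dist_at_gap_ge0.
Qed.

End Supersolution.

Lemma value_eq_fixpoint :
  (forall z, (0 < age z)%N -> bellman_gap V z = 0) -> value P r gamma beta pe pd p0 = expect p0 V.
Proof.
move=> V_fix.
have gap_series0 n : series (gap_term V) n = 0.
  rewrite /series /= big1 // => t _; rewrite /gap_term /expect big1 ?mulr0 // => z _.
  have [z_age0|z_pos] := posnP (age z); first by rewrite dist_at_age0 // mul0r.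
  by rewrite V_fix // mulr0.
apply/le_anti/andP; split.
  by apply: value_le_supersolution => z /V_fix ->.
apply: (value_ge_eventually _ (\sum_z `|V z|)); apply: nearW => n.
move: (discounted_expect_bound n).
by rewrite (partial_valueE V) gap_series0 ler_norml => /andP[_ hi]; lra.
Qed.

End PolicyEvaluation.

Section PointMass.
Context {R : realType} {S : finType} {Tmax : nat}.
Local Notation state := (pstate S Tmax).

Lemma point_ge0 (z0 z : state) : 0 <= Defs.point R z0 z.
Proof. exact: ler0n. Qed.

Lemma expect_point (z0 : state) (f : state -> R) : expect (Defs.point R z0) f = f z0.
Proof.
rewrite /expect (bigD1 z0) //= /Defs.point eqxx mul1r big1 ?addr0 // => z /negbTE ->.
by rewrite mul0r.
Qed.

Lemma point_sum1 (z0 : state) : \sum_z Defs.point R z0 z = 1.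
Proof. by rewrite -(expect_point z0 (fun _ => 1)); apply: eq_bigr => z _; rewrite mulr1. Qed.

Lemma point_age0 (z0 : state) : (0 < z0.1.2)%N ->
  forall z : state, nat_of_ord z.1.2 = 0%N -> Defs.point R z0 z = 0.
Proof.
by move=> z0_pos z z_age0; rewrite /Defs.point; case: eqP => // zE; rewrite -zE z_age0 in z0_pos.
Qed.

End PointMass.

Section Counterexample.
Variable R : realType.

Local Notation state := (pstate bool 1).
Local Notation age z := (nat_of_ord z.1.2).

Definition coin : bool -> bool -> bool -> R := fun _ _ s' => if s' then 3 / 4 else 1 / 4.
Definition match_reward : bool -> bool -> bool -> R := fun s _ a => (a == s)%:R.
Definition half : R := 1 / 2.
Definition start_true : bool -> R := fun s => s%:R.

Definition send_true : enc_policy bool 1 := [ffun z => z.1.1].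
Definition sends_state (pe : enc_policy bool 1) : Prop :=
  forall z : state, age z = 1%N -> pe z = z.1.1.
Definition guess_when_silent (b : bool) : dec_policy bool bool 1 :=
  [ffun k => if k.1 == ord0 then k.2 else b].

(* Solutions of the Bellman equations of (send_true, guess_when_silent false) and of
   (per_enc bool 1, guess_when_silent true); a decision at age 1 follows a transmission. *)
Definition api_value (z : state) : R :=
  if (age z == 1%N) && ~~ z.1.1 then 14 / 9 else 10 / 9.
Definition per_value (z : state) : R :=
  if age z == 1%N then (if z.1.1 then 19 / 12 else 7 / 12) else 7 / 6.

Local Notation value_at pe pd z0 := (value coin match_reward half half pe pd (Defs.point R z0)).
Local Notation gap pe pd := (bellman_gap coin match_reward half half pe pd).

Lemma coin_ge0 a s s' : 0 <= coin a s s'.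
Proof. by rewrite /coin; case: s'; lra. Qed.

Lemma coin_sum1 a s : \sum_s' coin a s s' = 1.
Proof. by rewrite big_bool /coin /=; lra. Qed.

Lemma half_gt0 : 0 < half.
Proof. by rewrite /half; lra. Qed.

Lemma half_lt1 : half < 1.
Proof. by rewrite /half; lra. Qed.

Lemma age_gt0_cases (z : state) : (0 < age z)%N -> age z = 1%N \/ age z = 2%N.
Proof. by case: z => [[s [[|[|[|k]]] lt_k]] sh] //= _; [left | right]. Qed.

Lemma transmitE pe (z : state) : transmit pe z = (age z == 2%N) || pe z.
Proof. by []. Qed.

Lemma post_ageE pe (z : state) :
  nat_of_ord (post_age pe z) = if transmit pe z then 0%N else age z.
Proof.
rewrite /post_age; case: ifP => // silent; rewrite inordK //.
by move: silent; rewrite transmitE; case: z => [[s [[|[|[|k]]] lt_k]] sh].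
Qed.

Lemma next_ageE pe (z : state) s' :
  age (next_state pe z s') = if transmit pe z then 1%N else (age z).+1.
Proof.
rewrite /next_state /= inordK; first by rewrite post_ageE; case: ifP.
by rewrite ltnS; case: (post_age pe z) => [[|[|k]] lt_k].
Qed.

Lemma act_guess_when_silent pe b (z : state) : (0 < age z)%N ->
  act pe (guess_when_silent b) z = if transmit pe z then z.1.1 else b.
Proof.
move=> z_pos; rewrite /act /guess_when_silent ffunE /= /post_last.
have -> : (post_age pe z == ord0) = transmit pe z.
  by rewrite -val_eqE /= post_ageE; case: ifP => // _; apply/negbTE; rewrite -lt0n.
by case: transmit.
Qed.

Lemma bellman_api_value pe pd (z : state) : (0 < age z)%N ->
  bellman coin match_reward half half pe pd api_value z =
  (act pe pd z == z.1.1)%:R + (if transmit pe z then 1 / 9 else 5 / 9).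
Proof.
move=> z_pos; rewrite /bellman /stage_reward !big_bool /coin /match_reward /half /=.
rewrite /api_value !next_ageE /=; case: transmit => /=; first lra.
by rewrite andbF andbT eqSS (negbTE (lt0n_neq0 z_pos)); lra.
Qed.

Lemma gap_api_value_sends_state pe pd (z : state) : sends_state pe -> (0 < age z)%N ->
  gap pe pd api_value z = (act pe pd z != z.1.1)%:R.
Proof.
move=> pe_sends z_pos; rewrite /bellman_gap bellman_api_value // transmitE /api_value.
case: (age_gt0_cases _ z_pos) => age_z; rewrite age_z /= ?pe_sends //.
all: by case: z.1.1; case: (act pe pd z == _) => /=; lra.
Qed.

Lemma gap_api_value_guess_false pe (z : state) : (0 < age z)%N ->
  gap pe (guess_when_silent false) api_value z =
  if (age z == 1%N) && (pe z != z.1.1) then (if z.1.1 then 5 / 9 else 4 / 9) else 0.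
Proof.
move=> z_pos; rewrite /bellman_gap bellman_api_value // act_guess_when_silent // transmitE.
rewrite /api_value; case: (age_gt0_cases _ z_pos) => -> /=; last by rewrite eqxx /=; lra.
by case: z.1.1; case: (pe z) => /=; lra.
Qed.

Lemma gap_per_value (z : state) : (0 < age z)%N ->
  gap (per_enc bool ord_max) (guess_when_silent true) per_value z = 0.
Proof.
move=> z_pos; rewrite /bellman_gap /bellman /stage_reward !big_bool act_guess_when_silent //.
rewrite /coin /match_reward /half /per_value !next_ageE transmitE /per_enc ffunE /=.
case: (age_gt0_cases _ z_pos) => -> /=; last by rewrite eqxx /=; lra.
by case: z.1.1 => /=; lra.
Qed.

Section PointValues.
Variables (pe : enc_policy bool 1) (pd : dec_policy bool bool 1) (V : state -> R) (z0 : state).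
Hypothesis z0_pos : (0 < age z0)%N.

Local Ltac model_facts := solve [exact: coin_ge0 | exact: coin_sum1 | exact: point_ge0
  | exact: point_sum1 | exact: point_age0 z0_pos | exact: ltW half_gt0 | exact: half_lt1
  | exact: half_gt0 | assumption].

Lemma value_at_eq : (forall z, (0 < age z)%N -> gap pe pd V z = 0) -> value_at pe pd z0 = V z0.
Proof. by move=> V_fix; rewrite -(expect_point z0 V); apply: value_eq_fixpoint; model_facts. Qed.

Hypothesis V_super : forall z, (0 < age z)%N -> 0 <= gap pe pd V z.

Lemma value_at_le : value_at pe pd z0 <= V z0.
Proof. by rewrite -(expect_point z0 V); apply: value_le_supersolution; model_facts. Qed.

Lemma value_at_lt t z : 0 < dist_at coin pe pd (Defs.point R z0) t z -> 0 < gap pe pd V z ->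
  value_at pe pd z0 < V z0.
Proof.
move=> dist_gt0 gap_gt0; rewrite -(expect_point z0 V).
by apply: value_lt_supersolution dist_gt0 gap_gt0; model_facts.
Qed.

End PointValues.

Lemma send_true_sends_state : sends_state send_true.
Proof. by move=> z _; rewrite ffunE. Qed.

Lemma act_guess_false_sends_state pe (z : state) : sends_state pe -> (0 < age z)%N ->
  act pe (guess_when_silent false) z = z.1.1.
Proof.
move=> pe_sends z_pos; rewrite act_guess_when_silent // transmitE.
by case: (age_gt0_cases _ z_pos) => age_z; rewrite age_z //= pe_sends //; case: z.1.1.
Qed.

Lemma value_at_api pe (z0 : state) : sends_state pe -> (0 < age z0)%N ->
  value_at pe (guess_when_silent false) z0 = api_value z0.
Proof.
move=> pe_sends z0_pos; apply: value_at_eq => // z z_pos.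
by rewrite gap_api_value_sends_state // act_guess_false_sends_state ?eqxx.
Qed.

Lemma dec_BR_guess_false pe : sends_state pe ->
  dec_BR coin match_reward half half pe (guess_when_silent false).
Proof.
move=> pe_sends s pd; rewrite value_at_api //.
by apply: value_at_le => // z z_pos; rewrite gap_api_value_sends_state ?ler0n.
Qed.

Lemma enc_BR_send_true : enc_BR coin match_reward half half (guess_when_silent false) send_true.
Proof.
move=> z pe z_pos; rewrite (value_at_api _ _ send_true_sends_state z_pos).
apply: value_at_le => // z' z'_pos; rewrite gap_api_value_guess_false //.
by case: ifP => _; [case: ifP => _ | ]; lra.
Qed.

Lemma enc_BR_guess_false_sends_state pe :
  enc_BR coin match_reward half half (guess_when_silent false) pe -> sends_state pe.
Proof.
move=> pe_BR z age_z; apply/eqP/negPn/negP => pe_deviates.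
have z_pos : (0 < age z)%N by rewrite age_z.
have := pe_BR z send_true z_pos; apply/negP.
rewrite -ltNge (value_at_api _ _ send_true_sends_state z_pos).
apply: (value_at_lt _ _ _ _ z_pos _ 0 z).
- move=> z' z'_pos; rewrite gap_api_value_guess_false //.
  by case: ifP => _; [case: ifP => _ | ]; lra.
- by rewrite /= /Defs.point eqxx ltr01.
- by rewrite gap_api_value_guess_false // age_z pe_deviates /=; case: ifP => _; lra.
Qed.

Lemma dec_BR_sends_state pe pd : sends_state pe ->
  dec_BR coin match_reward half half pe pd -> pd = guess_when_silent false.
Proof.
move=> pe_sends pd_BR.
have acts_right s t z : 0 < dist_at coin pe pd (Defs.point R (start_state 1 s)) t z ->
    (0 < age z)%N -> act pe pd z = z.1.1.
  move=> dist_gt0 z_pos; apply/eqP/negPn/negP => pd_wrong.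
  have := pd_BR s (guess_when_silent false); apply/negP; rewrite -ltNge value_at_api //.
  apply: (value_at_lt _ _ _ _ _ _ t z dist_gt0) => // [z' z'_pos|].
    by rewrite gap_api_value_sends_state ?ler0n.
  by rewrite gap_api_value_sends_state // pd_wrong ltr01.
apply/ffunP => -[k sh]; rewrite ffunE /=.
set z0 := start_state 1 sh; set z1 := next_state pe z0 false.
have z1_age : age z1 = 1%N by rewrite next_ageE.
have z1_silent : transmit pe z1 = false by rewrite transmitE z1_age pe_sends.
case: k => [[|[|k]] lt_k] //.
- have -> : Ordinal lt_k = ord0 by exact/val_inj.
  have := acts_right sh 0 z0; rewrite /= /Defs.point eqxx ltr01 => /(_ isT isT).
  by rewrite /act /post_age /post_last.
- have dist_z1 : 0 < dist_at coin pe pd (Defs.point R z0) 1 z1.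
    have := step_next_ge coin pe pd coin_ge0 _ z0 false (point_ge0 z0).
    apply: lt_le_trans.
    by rewrite /Defs.point eqxx mul1r /coin; lra.
  have := acts_right sh 1 z1 dist_z1; rewrite z1_age => /(_ isT).
  rewrite /act /post_age /post_last z1_silent /= => <-.
  by congr (pd (_, _)); apply: val_inj; rewrite /= !inordK.
Qed.

Lemma API_stops_at_send_true :
  API_output coin match_reward half half send_true send_true (guess_when_silent false).
Proof.
exists 1%N, (fun _ => send_true), (fun _ => guess_when_silent false); split => //.
- split=> k _; [exact: dec_BR_guess_false send_true_sends_state | exact: enc_BR_send_true].
- by case=> [|[]].
Qed.

Lemma API_output_send_true pe pd :
  API_output coin match_reward half half send_true pe pd ->
  sends_state pe /\ pd = guess_when_silent false.
Proof.
move=> [N [pes [pds [pes0 [dec_BR_k enc_BR_k] _ _ [-> ->]]]]].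
have pes_sends k : (k <= N)%N -> sends_state (pes k).
  elim: k => [|k IH] le_kN; first by rewrite pes0; exact: send_true_sends_state.
  apply: enc_BR_guess_false_sends_state.
  have le_kN' := ltnW le_kN.
  by rewrite -(dec_BR_sends_state _ _ (IH le_kN') (dec_BR_k k le_kN')); exact: enc_BR_k.
by split; [exact: pes_sends | exact: dec_BR_sends_state _ _ (pes_sends N _) (dec_BR_k N _)].
Qed.

Lemma init_dist_start_true : init_dist start_true = Defs.point R (start_state 1 true).
Proof.
by apply/funext => -[[[] d] sh]; rewrite /init_dist /Defs.point /start_true /= ?mul1r ?mul0r.
Qed.

Lemma value_per_start :
  value_at (per_enc bool ord_max) (guess_when_silent true) (start_state 1 true) = 7 / 6.
Proof. exact: value_at_eq gap_per_value. Qed.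

End Counterexample.

Theorem lemma3 (R : realType) :
  exists (S A : finType) (Tmax : nat) (P : A -> S -> S -> R)
         (r : S -> S -> A -> R) (gamma beta : R) (mu0 : S -> R)
         (pe0 : enc_policy S Tmax),
    [/\ stochastic P, 0 <= gamma < 1, 0 < beta /\ prob_dist mu0,
        (exists pe pd, API_output P r gamma beta pe0 pe pd)
      & forall pe pd, API_output P r gamma beta pe0 pe pd ->
          forall (tau : 'I_Tmax.+1) (pd' : dec_policy S A Tmax), per_optimal P r gamma beta mu0 tau pd' ->
            Rbeta P r gamma beta mu0 pe pd < Rbeta P r gamma beta mu0 (per_enc S tau) pd'].
Proof.
exists bool, bool, 1%N, (coin R), (match_reward R), (half R), (half R), (start_true R), send_true.
split.
- by split; [exact: coin_ge0 | exact: coin_sum1].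
- by rewrite ltW ?half_gt0 ?half_lt1.
- split; first exact: half_gt0.
  by split=> [s|]; rewrite ?big_bool /start_true ?ler0n //= addr0.
- by exists send_true, (guess_when_silent false); exact: API_stops_at_send_true.
- move=> pe pd /API_output_send_true[pe_sends ->] tau pd' per_opt.
  apply: lt_le_trans (per_opt ord_max (guess_when_silent true)).
  rewrite /Rbeta init_dist_start_true value_at_api // value_per_start /api_value /=; lra.
Qed.
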